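(* Let $\hat v$ be a rank-one discrete valuation on a complete field with valuation ring $R_{\hat v}$, maximal ideal $\mathfrak m_{\hat v}$, residue field $\Delta_{\hat v}$, containing a field $k$ of characteristic $0$ on which $\hat v$ is trivial, and let $\varphi:R_{\hat v}\to\Delta_{\hat v}$ be the natural homomorphism. Let $\mathbb F\subset R_{\hat v}$ and $\mathbb F'\subset\Delta_{\hat v}$ be subfields containing $k$ with $\varphi(\mathbb F)\subseteq \mathbb F'$, and let $\sigma:\mathbb F'\to\mathbb F$ be a $k$-homomorphism with $\varphi\circ\sigma=\mathrm{id}_{\mathbb F'}$. Let $\omega\in R_{\hat v}$ with $\hat v(\omega)=0$. If $\omega+\mathfrak m_{\hat v}$ is transcendental (resp. algebraic) over $\mathbb F'$, then there exists a $k$-section $\sigma':\Delta_{\hat v}\to R_{\hat v}$ of $\varphi$ (i.e. a $k$-homomorphism with $\varphi\circ\sigma'=\mathrm{id}$) extending $\sigma$ such that $\sigma'(\omega+\mathfrak m_{\hat v})$ is transcendental (resp. algebraic) over $\mathbb F$. *)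

From HB Require Import structures.
From mathcomp Require Import all_boot all_order all_algebra.
Set Implicit Arguments. Unset Strict Implicit. Unset Printing Implicit Defensive.
Import Order.TTheory GRing.Theory Num.Theory.
Local Open Scope ring_scope.

Definition is_subfield (L : fieldType) (S : pred L) : Prop :=
  [/\ 0 \in S, 1 \in S,
      (forall x y, x \in S -> y \in S -> x - y \in S),
      (forall x y, x \in S -> y \in S -> x * y \in S) &
      (forall x, x \in S -> x^-1 \in S)].

Definition algebraic_over (L : fieldType) (S : pred L) (x : L) : Prop :=
  exists2 p : {poly L}, (p != 0) && (p \is a polyOver S) & root p x.

(* v : K -> int is a rank-one discrete valuation on K (the value at 0 is
   irrelevant, v 0 is "+oo"); the value group is a nontrivial subgroup of Z. *)
Definition discrete_valuation (K : fieldType) (v : K -> int) : Prop :=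
  [/\ (forall x y, x != 0 -> y != 0 -> v (x * y) = v x + v y),
      (forall x y, x != 0 -> y != 0 -> x + y != 0 ->
         Order.min (v x) (v y) <= v (x + y)) &
      (exists x, (x != 0) && (v x != 0))].

Definition vge (K : fieldType) (v : K -> int) (x : K) (n : int) : bool :=
  (x == 0) || (n <= v x).

Definition complete_wrt (K : fieldType) (v : K -> int) : Prop :=
  forall u : nat -> K,
    (forall N : int, exists M : nat, forall p q : nat,
        (M <= p)%N -> (M <= q)%N -> vge v (u p - u q) N) ->
    exists l : K, forall N : int, exists M : nat, forall n : nat,
        (M <= n)%N -> vge v (u n - l) N.

Definition val_ring (K : fieldType) (v : K -> int) : pred K :=
  fun x => vge v x 0.
Definition max_ideal (K : fieldType) (v : K -> int) : pred K :=
  fun x => vge v x 1.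

(* phi : K -> Delta (only its restriction to R_v matters) is the natural
   homomorphism R_v -> R_v / m_v onto the residue field Delta: a surjective
   ring homomorphism R_v -> Delta whose kernel is m_v. *)
Definition residue_map (K Delta : fieldType) (v : K -> int) (phi : K -> Delta)
  : Prop :=
  [/\ phi 1 = 1,
      (forall x y, x \in val_ring v -> y \in val_ring v ->
         phi (x + y) = phi x + phi y),
      (forall x y, x \in val_ring v -> y \in val_ring v ->
         phi (x * y) = phi x * phi y),
      (forall z : Delta, exists2 x, x \in val_ring v & phi x = z) &
      (forall x, x \in val_ring v -> (phi x == 0) = (x \in max_ideal v))].

From HB Require Import structures.
From mathcomp Require Import all_boot all_order all_algebra.
From mathcomp Require Import zify ring.
From mathcomp Require Import boolp classical_sets.
Set Implicit Arguments. Unset Strict Implicit. Unset Printing Implicit Defensive.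
Import Order.TTheory GRing.Theory Num.Theory.
Local Open Scope ring_scope.
Local Open Scope classical_set_scope.

(* The section of the residue map is the inverse of phi on a coefficient field.
   Call a subring A of R_v a lifting subring when it meets m_v only in 0, so
   that phi is injective on A; by Zorn's lemma sigma(F') lies in a maximal one.
   Maximality makes A a field (its fractions form a lifting subring) and forces
   phi(A) = Delta.  If z is transcendental over phi(A), any lift y of z gives a
   lifting subring A[y].  If z is algebraic, its minimal polynomial p over
   phi(A) is separable in characteristic 0, so Hensel's lemma lifts z to a root
   y of a lift q of p; reducing modulo q and using the minimality of p shows
   that A[y] is again a lifting subring.  Finally, for the section s, a relation
   over F for s(phi omega) reduces modulo m_v to a relation over F' for
   phi omega, while a relation over F' is carried by s to one over F. *)

(* A Prop-valued polyOver, for coefficient sets such as those given by Zorn's lemma. *)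
Definition coefs_in (R : nzRingType) (A : R -> Prop) (p : {poly R}) :=
  forall i, A p`_i.

Lemma coefs_inMXaddC (R : nzRingType) (A : R -> Prop) p c :
  coefs_in A (p * 'X + c%:P) -> A c /\ coefs_in A p.
Proof.
move=> Ap; split; first by have := Ap 0%N; rewrite coefD coefMX coefC add0r.
by move=> i; have := Ap i.+1; rewrite coefD coefMX coefC addr0.
Qed.

Lemma size_sub_lead (R : nzRingType) (p q : {poly R}) :
  size p = size q -> lead_coef p = lead_coef q -> (0 < size p)%N ->
  (size (p - q)%R < size p)%N.
Proof.
move=> spq lpq p0; rewrite -ltn_predL in p0; apply: leq_ltn_trans p0.
apply/leq_sizeP => j jp; rewrite coefB.
have [->|] := eqVneq j (size p).-1; first by rewrite -lead_coefE spq -lead_coefE lpq subrr.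
move=> /eqP ne; rewrite !nth_default ?subrr // -?spq;
  by move: jp ne; case: (size p) => // n /=; lia.
Qed.

Lemma coefs_in_reduce (R : fieldType) (A : R -> Prop) (q g : {poly R}) y :
    (forall a b, A a -> A b -> A (a - b)) -> (forall a b, A a -> A b -> A (a * b)) ->
    coefs_in A q -> A (lead_coef q)^-1 -> q != 0 -> root q y -> coefs_in A g ->
  exists r, [/\ coefs_in A r, (size r < size q)%N & r.[y] = g.[y]].
Proof.
move=> AB AM Aq Aq' q0 /rootP qy; have A0 : A 0 by rewrite -(subrr q`_0); apply: AB.
have [n] := ubnP (size g); elim: n g => // n IH g sgn Ag.
have [sgq|sqg] := ltnP (size g) (size q); first by exists g.
have g0 : g != 0 by rewrite -size_poly_gt0; apply: leq_trans sqg; rewrite size_poly_gt0.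
pose c := lead_coef g / lead_coef q; pose d := (size g - size q)%N.
have c0 : c != 0 by rewrite mulf_neq0 ?invr_eq0 ?lead_coef_eq0.
have sg' : (size (g - c *: q * 'X^d)%R < n)%N.
  rewrite (leq_trans _ (_ : size g <= n)%N) // size_sub_lead //.
  - by rewrite size_mulXn ?scaler_eq0 ?negb_or ?c0 // size_scale // subnK.
  - by rewrite lead_coef_Mmonic ?monicXn // lead_coefZ divfK ?lead_coef_eq0.
  - by rewrite size_poly_gt0.
have Ag' : coefs_in A (g - c *: q * 'X^d).
  move=> i; rewrite coefB coefMXn coefZ; apply: (AB) => //.
  by case: ifP => // _; apply: (AM) => //; apply: (AM); rewrite ?lead_coefE.
have [r [Ar srq ry]] := IH _ sg' Ag'.
by exists r; rewrite ry hornerD hornerN hornerM hornerZ qy mulr0 mul0r subr0.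
Qed.

Lemma deriv_neq0_pchar0 (R : idomainType) (p : {poly R}) :
  [pchar R] =i pred0 -> (1 < size p)%N -> p^`() != 0.
Proof.
move=> /pcharf0P ch0 sp; apply/eqP => dp0; have := congr1 (fun r : {poly R} => r`_(size p).-2) dp0.
rewrite coef_deriv coef0 prednK ?ltn_predRL // -lead_coefE -mulr_natr.
by move/eqP; rewrite mulf_eq0 ch0 lead_coef_eq0 -size_poly_eq0; lia.
Qed.

Lemma polyOverP0 (R : nzRingType) (S : pred R) (p : {poly R}) :
  0 \in S -> reflect (forall i, p`_i \in S) (p \is a polyOver S).
Proof.
move=> S0; apply: (iffP (all_nthP 0)) => [Sp i | Sp i _]; last exact: Sp.
by have [/Sp // | /(nth_default 0)->] := ltnP i (size p).
Qed.

Lemma is_subfield_natr (L : fieldType) (S : pred L) n : is_subfield S -> n%:R \in S.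
Proof.
case=> S0 S1 SB _ _; elim: n => [//|n IH].
have -> : n.+1%:R = n%:R - (0 - 1) :> L by rewrite sub0r opprK mulrSr.
by rewrite SB // SB.
Qed.

Lemma algebraic_over_rmorph (L M : fieldType) (f : {rmorphism L -> M})
    (S : pred L) (T : pred M) x :
    0 \in S -> 0 \in T -> {in S, forall y, f y \in T} ->
  algebraic_over S x -> algebraic_over T (f x).
Proof.
move=> S0 T0 ST [p /andP[p0 /(polyOverP0 _ S0) Sp] px]; exists (map_poly f p).
  by rewrite map_poly_eq0 p0; apply/(polyOverP0 _ T0) => i; rewrite coef_map ST.
exact: rmorph_root.
Qed.

Lemma ex_min_size_root (R : nzRingType) (A : R -> Prop) z :
    (exists p, [/\ p != 0, coefs_in A p & root p z]) ->
  exists p, [/\ p != 0, coefs_in A p, root p z &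
    forall q, q != 0 -> coefs_in A q -> root q z -> (size p <= size q)%N].
Proof.
move=> [p1 [p10 Ap1 p1z]].
pose P n := `[< exists p, [/\ p != 0, coefs_in A p, root p z & size p = n] >].
have [|n /asboolP[p [p0 Ap pz <-]] pmin] := @ex_minnP P.
  by exists (size p1); apply/asboolP; exists p1.
by exists p; split => // q q0 Aq qz; apply: pmin; apply/asboolP; exists q.
Qed.

Lemma ex_maximal_above (T : Type) (P : set (set T)) (S : set T) :
    P S ->
    (forall F, F `<=` P -> F !=set0 -> total_on F subset ->
       P (\bigcup_(X in F) X)) ->
  exists A, [/\ S `<=` A, P A & forall B, A `<=` B -> P B -> B = A].
Proof.
move=> PS Pchain.
have [A [PSA Amax]] : exists A, P (S `|` A) /\ forall B, A `<` B -> ~ P (S `|` B).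
  apply: Zorn_bigcup => F FP Ftot.
  have [->|/set0P F0] := eqVneq F set0; first by rewrite bigcup_set0 setU0.
  rewrite -bigcupUr //.
  suff -> : \bigcup_(X in F) (S `|` X) = \bigcup_(Y in setU S @` F) Y.
    apply: Pchain.
    - by move=> _ [X FX <-]; apply: FP.
    - by have [X FX] := F0; exists (S `|` X), X.
    - move=> _ _ [X FX <-] [Y FY <-].
      by case: (Ftot X Y FX FY) => XY; [left|right]; apply: setUS.
  by rewrite bigcup_image.
exists (S `|` A); split => // B SAB PB.
have SB : S `|` B = B by apply: setUidr; apply: subset_trans SAB; apply: subsetUl.
have [BA|nBA] := pselect (B `<=` A).
  by apply/seteqP; split => // x /BA; right.
by exfalso; apply: (Amax B); [split => //; apply: subset_trans SAB | rewrite SB].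
Qed.

Section Valuation.
Variables (K : fieldType) (v : K -> int).
Hypothesis dv : discrete_valuation v.

Lemma valuation1 : v 1 = 0.
Proof. by case: dv => vM _ _; have := vM 1 1 (oner_neq0 K) (oner_neq0 K); rewrite mulr1; lia. Qed.

Lemma valuationN x : x != 0 -> v (- x) = v x.
Proof.
case: dv => vM _ _ x0; have N1 : (-1 : K) != 0 by rewrite oppr_eq0 oner_neq0.
have := vM _ _ N1 N1; rewrite mulrNN mulr1 valuation1 => vN1.
by rewrite -mulN1r vM //; lia.
Qed.

Lemma valuationV x : x != 0 -> v x^-1 = - v x.
Proof.
case: dv => vM _ _ x0; have := vM _ _ x0 (invr_neq0 x0).
by rewrite divff // valuation1; lia.
Qed.

Lemma vge0 n : vge v 0 n.
Proof. by rewrite /vge eqxx. Qed.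

Lemma vgeW x m n : m <= n -> vge v x n -> vge v x m.
Proof. by rewrite /vge => mn /orP[->|/(le_trans mn) ->]; rewrite ?orbT. Qed.

Lemma vgeD x y n : vge v x n -> vge v y n -> vge v (x + y) n.
Proof.
case: dv => _ vD _; rewrite /vge.
have [->|x0] := eqVneq x 0; first by rewrite add0r.
have [->|y0] := eqVneq y 0; first by rewrite addr0 (negbTE x0) => ? _.
have [//|xy0] /= := eqVneq (x + y) 0.
by move=> nx ny; apply: le_trans (vD _ _ x0 y0 xy0); rewrite le_min nx ny.
Qed.

Lemma vgeN x n : vge v (- x) n = vge v x n.
Proof. by rewrite /vge oppr_eq0; have [//|x0] /= := eqVneq x 0; rewrite valuationN. Qed.

Lemma vgeB x y n : vge v x n -> vge v y n -> vge v (x - y) n.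
Proof. by move=> nx ny; rewrite vgeD ?vgeN. Qed.

Lemma vgeM x y m n : vge v x m -> vge v y n -> vge v (x * y) (m + n).
Proof.
case: dv => vM _ _; rewrite /vge mulf_eq0.
have [//|x0] := eqVneq x 0; have [//|y0] /= := eqVneq y 0.
by rewrite vM //; apply: lerD.
Qed.

Lemma vgeMn x n : vge v x 0 -> vge v (x *+ n) 0.
Proof. by move=> Rx; elim: n => [|n IH]; rewrite ?mulr0n ?vge0 // mulrS vgeD. Qed.

Lemma vge1 : vge v 1 0.
Proof. by rewrite /vge valuation1 lexx orbT. Qed.

Lemma vge_unit x : vge v x 0 -> ~~ vge v x 1 -> x != 0 /\ v x = 0.
Proof. by rewrite /vge; have [//|x0] /= := eqVneq x 0; split => //; lia. Qed.

Lemma vge_divr x u n : vge v x n -> u != 0 -> v u = 0 -> vge v (x / u) n.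
Proof.
move=> nx u0 vu; have Ru : vge v u^-1 0 by rewrite /vge valuationV // vu oppr0 lexx orbT.
by have := vgeM nx Ru; rewrite addr0.
Qed.

Lemma vge_subC x y n : vge v (x - y) n = vge v (y - x) n.
Proof. by rewrite -opprB vgeN. Qed.

Lemma vge_trans y x z n : vge v (x - y) n -> vge v (y - z) n -> vge v (x - z) n.
Proof. by move=> nxy nyz; rewrite -(subrK y x) -addrA vgeD. Qed.

Lemma vge_congr x y n : vge v (x - y) n -> vge v x n = vge v y n.
Proof.
move=> nxy; apply/idP/idP => [nx | ny]; last by rewrite -(subrK y x) vgeD.
by rewrite -(subrK x y) vgeD // vge_subC.
Qed.

Lemma vge_eq0 x : (forall n, vge v x n) -> x = 0.
Proof. by move/(_ (v x + 1)); rewrite /vge => /orP[/eqP //|]; lia. Qed.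

Local Notation R_v := (fun x : K => vge v x 0).

Lemma vge_horner p a : coefs_in R_v p -> R_v a -> R_v p.[a].
Proof.
move=> + Ra; elim/poly_ind: p => [|p c IH] Rpc; first by rewrite horner0 vge0.
have [Rc Rp] := coefs_inMXaddC Rpc.
by rewrite hornerMXaddC vgeD // -[0]addr0 vgeM ?IH.
Qed.

Lemma coefs_in_deriv p : coefs_in R_v p -> coefs_in R_v p^`().
Proof. by move=> Rp i; rewrite coef_deriv vgeMn. Qed.

Lemma taylor1 q a h : coefs_in R_v q -> R_v a -> R_v h ->
  exists2 r, R_v r & q.[a + h] = q.[a] + h * r.
Proof.
move=> + Ra Rh; elim/poly_ind: q => [|p c IH] Rpc.
  by exists 0; rewrite ?vge0 // !horner0 mulr0 addr0.
have [Rc Rp] := coefs_inMXaddC Rpc.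
have [r Rr E] := IH Rp.
exists (p.[a] + r * (a + h)); last by rewrite !hornerMXaddC E; ring.
by rewrite vgeD ?vge_horner // -[0]addr0 vgeM ?vgeD.
Qed.

Lemma taylor2 q a h : coefs_in R_v q -> R_v a -> R_v h ->
  exists2 r, R_v r & q.[a + h] = q.[a] + h * q^`().[a] + h ^+ 2 * r.
Proof.
move=> + Ra Rh; elim/poly_ind: q => [|p c IH] Rpc.
  by exists 0; rewrite ?vge0 // deriv0 !horner0 !mulr0 !addr0.
have [Rc Rp] := coefs_inMXaddC Rpc.
have [r2 Rr2 E2] := IH Rp; have [r1 Rr1 E1] := taylor1 Rp Ra Rh.
exists (r2 * a + r1); first by rewrite vgeD // -[0]addr0 vgeM.
rewrite derivMXaddC hornerD hornerMX !hornerMXaddC mulrDr {1}E2 E1; ring.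
Qed.

Lemma vge_hornerB q x y n : coefs_in R_v q -> R_v x -> R_v y -> 0 <= n ->
  vge v (x - y) n -> vge v (q.[x] - q.[y]) n.
Proof.
move=> Rq Rx Ry n0 nxy; have [r Rr] := taylor1 Rq Ry (vgeW n0 nxy).
by rewrite addrC subrK => ->; rewrite addrC addKr -[n]addr0 vgeM.
Qed.

End Valuation.

Section Hensel.
Variables (K : fieldType) (v : K -> int).
Hypotheses (dv : discrete_valuation v) (cv : complete_wrt v).
Local Notation R_v := (fun x : K => vge v x 0).

Lemma cvg_of_vge_steps (u : nat -> K) :
  (forall n, vge v (u n.+1 - u n) n.+1%:Z) ->
  exists l, forall N : int, exists M, forall n, (M <= n)%N -> vge v (u n - l) N.
Proof.
move=> du; have far m j : vge v (u (m + j)%N - u m) m.+1%:Z.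
  elim: j => [|j IH]; first by rewrite addn0 subrr vge0.
  rewrite addnS -(subrK (u (m + j)%N) (u _)) -addrA (vgeD dv) //.
  by apply: vgeW (du _); lia.
apply: cv => N; exists `|N|%N => p q pN qN.
have -> : u p - u q = (u p - u `|N|%N) - (u q - u `|N|%N) by rewrite opprB addrA subrK.
rewrite -(subnKC pN) -(subnKC qN).
by apply: vgeW (vgeB dv (far _ _) (far _ _)); lia.
Qed.

Lemma newton_step q x n : coefs_in R_v q -> R_v x -> ~~ vge v q^`().[x] 1 ->
    vge v q.[x] n -> 0 < n ->
  vge v (q.[x] / q^`().[x]) n /\ vge v q.[x - q.[x] / q^`().[x]] (n + 1).
Proof.
move=> Rq Rx dq1 nq n0; set h := q.[x] / q^`().[x].
have [dq0 vdq] := vge_unit (vge_horner dv (coefs_in_deriv dv Rq) Rx) dq1.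
have nh : vge v h n by apply: vge_divr.
have Nh : vge v (- h) n by rewrite (vgeN dv).
split => //; have [r Rr ->] := taylor2 dv Rq Rx (vgeW (ltW n0) Nh).
rewrite mulNr divfK // subrr add0r sqrrN.
by apply: vgeW (vgeM dv (vgeM dv nh nh) Rr); lia.
Qed.

Lemma hensel q a0 : coefs_in R_v q -> R_v a0 ->
    vge v q.[a0] 1 -> ~~ vge v q^`().[a0] 1 ->
  exists a, [/\ R_v a, q.[a] = 0 & vge v (a - a0) 1].
Proof.
move=> Rq Ra0 q1 dq1.
have dq_unit x : R_v x -> vge v (x - a0) 1 -> ~~ vge v q^`().[x] 1.
  move=> Rx xa0.
  by rewrite (vge_congr dv (vge_hornerB dv (coefs_in_deriv dv Rq) Rx Ra0 _ xa0)).
have R_near x y : R_v y -> vge v (x - y) 1 -> R_v x.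
  by move=> Ry /(vgeW ler01) /(vge_congr dv) ->.
pose a n := iter n (fun x => x - q.[x] / q^`().[x]) a0.
have da n : a n.+1 - a n = - (q.[a n] / q^`().[a n]) by rewrite /= addrC addKr.
have step n : [/\ R_v (a n), vge v (a n - a0) 1, vge v q.[a n] n.+1%:Z
                & vge v (a n.+1 - a n) n.+1%:Z].
  elim: n => [|n [Ran an1 qan _]].
    have [h0 _] := newton_step Rq Ra0 dq1 q1 isT.
    by split => //; [rewrite subrr vge0 | rewrite da (vgeN dv)].
  have [hn qan1] := newton_step Rq Ran (dq_unit _ Ran an1) qan isT.
  have dan : vge v (a n.+1 - a n) 1 by rewrite da (vgeN dv); apply: vgeW hn; lia.
  have Ran1 := R_near _ _ Ran dan.
  have an1' := vge_trans dv dan an1.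
  have [hn1 _] := newton_step Rq Ran1 (dq_unit _ Ran1 an1') qan1 isT.
  by split => //; [apply: vgeW qan1 | rewrite (da n.+1) (vgeN dv); apply: vgeW hn1]; lia.
have [l lim] : exists l, forall N : int, exists M, forall n, (M <= n)%N -> vge v (a n - l) N.
  by apply: cvg_of_vge_steps => n; case: (step n).
have [M0 lM0] := lim 1; have [RaM0 aM0 _ _] := step M0.
have la0 : vge v (l - a0) 1 by rewrite (vge_trans dv _ aM0) // (vge_subC dv) lM0.
have Rl := R_near _ _ Ra0 la0.
exists l; split => //; apply: vge_eq0 => N; apply: (@vgeW _ v _ _ `|N|%:Z); first lia.
have [M lM] := lim `|N|%:Z; pose n := maxn M `|N|; have [Ran _ qan _] := step n.
have ln : vge v (l - a n) `|N|%:Z by rewrite (vge_subC dv) lM ?leq_maxl.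
rewrite -(subrK q.[a n] q.[l]) (vgeD dv) ?(vge_hornerB dv Rq Rl Ran _ ln) //.
by apply: vgeW qan; lia.
Qed.
End Hensel.

Section Residue.
Variables (K D : fieldType) (v : K -> int) (phi : K -> D).
Hypotheses (dv : discrete_valuation v) (rm : residue_map v phi).
Hypotheses (cv : complete_wrt v) (ch0 : [pchar D] =i pred0).
Local Notation R_v := (fun x : K => vge v x 0).

Lemma phiD x y : R_v x -> R_v y -> phi (x + y) = phi x + phi y.
Proof. by case: rm => _ + _ _ _; apply. Qed.

Lemma phiM x y : R_v x -> R_v y -> phi (x * y) = phi x * phi y.
Proof. by case: rm => _ _ + _ _; apply. Qed.

Lemma phi1 : phi 1 = 1.
Proof. by case: rm. Qed.

Lemma phi_eq0 x : R_v x -> (phi x == 0) = vge v x 1.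
Proof. by case: rm => _ _ _ _; apply. Qed.

Lemma phi_surj z : exists2 x, R_v x & phi x = z.
Proof. by case: rm => _ _ _ + _; apply. Qed.

Lemma phi0 : phi 0 = 0.
Proof. by apply: (addrI (phi 0)); rewrite -phiD ?vge0 ?addr0. Qed.

Lemma phiN x : R_v x -> phi (- x) = - phi x.
Proof.
by move=> Rx; apply: (addrI (phi x)); rewrite -phiD ?vgeN // !subrr phi0.
Qed.

Lemma phiB x y : R_v x -> R_v y -> phi (x - y) = phi x - phi y.
Proof. by move=> Rx Ry; rewrite phiD ?phiN ?vgeN. Qed.

Lemma phiMn x n : R_v x -> phi (x *+ n) = phi x *+ n.
Proof.
move=> Rx; elim: n => [|n IH]; first by rewrite !mulr0n phi0.
by rewrite !mulrS phiD ?IH ?vgeMn.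
Qed.

Lemma coef_map_phi p i : (map_poly phi p)`_i = phi p`_i.
Proof. exact/coef_map_id0/phi0. Qed.

Lemma map_phiMXaddC p c :
  map_poly phi (p * 'X + c%:P) = map_poly phi p * 'X + (phi c)%:P.
Proof.
apply/polyP => -[|i]; rewrite coef_map_phi !coefD !coefMX !coefC //=.
by rewrite !add0r.
by rewrite !addr0 coef_map_phi.
Qed.

Lemma phi_horner p a : coefs_in R_v p -> R_v a ->
  phi p.[a] = (map_poly phi p).[phi a].
Proof.
move=> + Ra; elim/poly_ind: p => [|p c IH] Rpc.
  by rewrite map_poly0 !horner0 phi0.
have [Rc Rp] := coefs_inMXaddC Rpc.
rewrite map_phiMXaddC !hornerMXaddC phiD ?phiM ?IH ?vge_horner //.
by rewrite -[0]addr0 vgeM ?vge_horner.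
Qed.

Lemma map_phi_deriv p : coefs_in R_v p -> map_poly phi p^`() = (map_poly phi p)^`().
Proof. by move=> Rp; apply/polyP => i; rewrite coef_deriv !coef_map_phi coef_deriv phiMn. Qed.

Lemma phi_congr x y : R_v x -> R_v y -> vge v (x - y) 1 -> phi x = phi y.
Proof.
move=> Rx Ry; rewrite -(phi_eq0 (vgeB dv Rx Ry)) phiB // subr_eq0.
by move/eqP.
Qed.

Lemma root_map_phi g y : coefs_in R_v g -> R_v y -> vge v g.[y] 1 ->
  root (map_poly phi g) (phi y).
Proof. by move=> Rg Ry gy; rewrite /root -phi_horner // phi_eq0 // vge_horner. Qed.

Lemma residue_pchar0 : (forall n, (0 < n)%N -> ~~ vge v n%:R 1) -> [pchar D] =i pred0.
Proof.
move=> nat_unit; apply/pcharf0P => -[|n]; first by rewrite !eqxx.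
rewrite -phi1 -phiMn ?(vge1 dv) // phi_eq0 ?(vgeMn dv) ?(vge1 dv) //.
by rewrite (negbTE (nat_unit _ _)).
Qed.

Definition lifting_subring (A : set K) :=
  [/\ A `<=` R_v, A 1, (forall x y, A x -> A y -> A (x - y)),
      (forall x y, A x -> A y -> A (x * y)) & forall x, A x -> vge v x 1 -> x = 0].

Lemma lifting_subring_image (F' : pred D) (sigma : D -> K) :
    is_subfield F' -> (forall y, y \in F' -> R_v (sigma y)) -> sigma 1 = 1 ->
    {in F' &, {morph sigma : y z / y + z}} -> {in F' &, {morph sigma : y z / y * z}} ->
    {in F', cancel sigma phi} ->
  lifting_subring [set sigma y | y in F'].
Proof.
case=> F0 F1 FB FM _ sR s1 sD sM phis.
have sB : {in F' &, {morph sigma : y z / y - z}}.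
  by move=> y z Fy Fz /=; apply: (addIr (sigma z)); rewrite -sD ?FB // !subrK.
split.
- by move=> _ [y Fy <-]; apply: sR.
- by exists 1.
- by move=> _ _ [y Fy <-] [z Fz <-]; exists (y - z); [apply: FB | apply: sB].
- by move=> _ _ [y Fy <-] [z Fz <-]; exists (y * z); [apply: FM | apply: sM].
- move=> _ [y Fy <-] y1; have /eqP : phi (sigma y) == 0 by rewrite phi_eq0 ?sR.
  by rewrite phis // => ->; rewrite -(subrr 0) sB // subrr.
Qed.

Lemma lifting_subring_bigcup (F : set (set K)) :
    F `<=` lifting_subring -> F !=set0 -> total_on F subset ->
  lifting_subring (\bigcup_(X in F) X).
Proof.
move=> Fl [X0 FX0] Ftot.
have closed2 (op : K -> K -> K) : (forall X, F X -> forall x y, X x -> X y -> X (op x y)) ->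
    forall x y, (\bigcup_(X in F) X) x -> (\bigcup_(X in F) X) y ->
    (\bigcup_(X in F) X) (op x y).
  move=> opX x y [X FX Xx] [Y FY Yy].
  by case: (Ftot X Y FX FY) => [/(_ x Xx) Yx | /(_ y Yy) Xy];
    [exists Y => //; apply: opX | exists X => //; apply: opX].
split.
- by move=> x [X /Fl [XR _ _ _ _] /XR].
- by exists X0 => //; case: (Fl X0 FX0).
- by apply: closed2 => X /Fl [].
- by apply: closed2 => X /Fl [].
- by move=> x [X /Fl [_ _ _ _ Xm] /Xm].
Qed.

Section Subring.
Variable A : set K.
Hypothesis hA : lifting_subring A.

Lemma lifting_R x : A x -> R_v x.
Proof. by case: hA => + _ _ _ _; apply. Qed.

Lemma lifting1 : A 1.
Proof. by case: hA. Qed.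

Lemma liftingB x y : A x -> A y -> A (x - y).
Proof. by case: hA => _ _ + _ _; apply. Qed.

Lemma liftingM x y : A x -> A y -> A (x * y).
Proof. by case: hA => _ _ _ + _; apply. Qed.

Lemma lifting_eq0 x : A x -> vge v x 1 -> x = 0.
Proof. by case: hA => _ _ _ _; apply. Qed.

Lemma lifting0 : A 0.
Proof. by rewrite -(subrr 1); apply: liftingB; apply: lifting1. Qed.

Lemma liftingD x y : A x -> A y -> A (x + y).
Proof.
move=> Ax Ay; have -> : x + y = x - (0 - y) by rewrite sub0r opprK.
by apply: liftingB => //; apply: liftingB => //; apply: lifting0.
Qed.

Lemma liftingMn x n : A x -> A (x *+ n).
Proof.
move=> Ax; elim: n => [|n IH]; first by rewrite mulr0n; apply: lifting0.
by rewrite mulrS; apply: liftingD.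
Qed.

Lemma lifting_unit x : A x -> x != 0 -> v x = 0.
Proof.
move=> Ax x0; have x1 : ~~ vge v x 1 by apply: contra x0 => /(lifting_eq0 Ax)/eqP.
by have [] := vge_unit (lifting_R Ax) x1.
Qed.

Lemma lifting_phi_inj x y : A x -> A y -> phi x = phi y -> x = y.
Proof.
move=> Ax Ay e; apply/eqP; rewrite -subr_eq0; apply/eqP/(lifting_eq0 (liftingB Ax Ay)).
by rewrite -phi_eq0 ?(vgeB dv) ?lifting_R // phiB ?lifting_R // e subrr.
Qed.

Lemma lifting_coefs_R g : coefs_in A g -> coefs_in R_v g.
Proof. by move=> Ag i; apply: lifting_R. Qed.

Lemma lifting_coefsC c : A c -> coefs_in A c%:P.
Proof. by move=> Ac i; rewrite coefC; case: eqP => _; [|apply: lifting0]. Qed.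

Lemma lifting_coefsX : coefs_in A 'X.
Proof. by move=> i; rewrite coefX; case: eqP => _; [apply: lifting1 | apply: lifting0]. Qed.

Lemma lifting_coefsB g h : coefs_in A g -> coefs_in A h -> coefs_in A (g - h).
Proof. by move=> Ag Ah i; rewrite coefB; apply: liftingB. Qed.

Lemma lifting_coefsM g h : coefs_in A g -> coefs_in A h -> coefs_in A (g * h).
Proof.
move=> Ag Ah i; rewrite coefM; apply: (big_ind A lifting0 liftingD) => j _.
exact: liftingM.
Qed.

Lemma lifting_coefs_deriv g : coefs_in A g -> coefs_in A g^`().
Proof.
by move=> Ag i; rewrite coef_deriv; apply: liftingMn.
Qed.

Lemma coefs_in_map_phi g : coefs_in A g -> coefs_in (phi @` A) (map_poly phi g).
Proof. by move=> Ag i; exists g`_i; rewrite ?coef_map_phi. Qed.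

Lemma lifting_size_map_phi g : coefs_in A g -> size (map_poly phi g) = size g.
Proof.
move=> Ag; have [->|g0] := eqVneq g 0; first by rewrite map_poly0 !size_poly0.
apply: size_map_poly_id0; rewrite -lead_coef_eq0 in g0; apply: contra g0 => /eqP lg0.
by apply/eqP/(lifting_phi_inj _ lifting0); rewrite ?lg0 ?phi0 ?lead_coefE.
Qed.

Lemma lifting_map_phi_eq0 g : coefs_in A g -> (map_poly phi g == 0) = (g == 0).
Proof. by move=> Ag; rewrite -size_poly_eq0 lifting_size_map_phi // size_poly_eq0. Qed.

Lemma lift_coefs p : coefs_in (phi @` A) p ->
  exists2 q, coefs_in A q & map_poly phi q = p.
Proof.
move=> Bp; have [f fP] : {f : nat -> K & forall i, A (f i) /\ phi (f i) = p`_i}.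
  by apply: (@choice _ _ (fun i x => A x /\ phi x = p`_i)) => i; have [x Ax <-] := Bp i; exists x.
exists (\poly_(i < size p) f i).
  by move=> i; rewrite coef_poly; case: ifP => _; [apply: (fP i).1 | apply: lifting0].
apply/polyP => i; rewrite coef_map_phi coef_poly; case: ltnP => [_|pi].
  exact: (fP i).2.
by rewrite phi0 nth_default.
Qed.

Lemma lifting_subring_frac :
  lifting_subring [set a / c | a in A & c in [set c | A c /\ c != 0]].
Proof.
have Rfrac a c : A a -> A c -> c != 0 -> R_v (a / c).
  by move=> Aa Ac c0; apply: (vge_divr dv (lifting_R Aa) c0 (lifting_unit Ac c0)).
split.
- by move=> _ [a Aa [c [Ac c0] <-]]; apply: Rfrac.
- have A1 : A 1 /\ (1 : K) != 0 by split; [apply: lifting1 | apply: oner_neq0].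
  by exists 1; [apply: lifting1 | exists 1; rewrite ?divr1].
- move=> _ _ [a Aa [c [Ac c0] <-]] [a' Aa' [c' [Ac' c'0] <-]].
  exists (a * c' - a' * c); first by apply: liftingB; apply: liftingM.
  exists (c * c'); first by split; [apply: liftingM | apply: mulf_neq0].
  by field; rewrite c0 c'0.
- move=> _ _ [a Aa [c [Ac c0] <-]] [a' Aa' [c' [Ac' c'0] <-]].
  exists (a * a'); first exact: liftingM.
  exists (c * c'); first by split; [apply: liftingM | apply: mulf_neq0].
  by field; rewrite c0 c'0.
- move=> _ [a Aa [c [Ac c0] <-]] ac1.
  suff -> : a = 0 by rewrite mul0r.
  apply: lifting_eq0 Aa _; rewrite -(divfK c0 a) -[1]addr0.
  exact: (vgeM dv ac1 (lifting_R Ac : vge v c 0)).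
Qed.

Lemma lifting_subring_adjoin y : R_v y ->
    (forall g, coefs_in A g -> vge v g.[y] 1 -> g.[y] = 0) ->
  lifting_subring [set g.[y] | g in coefs_in A].
Proof.
move=> Ry gy; split.
- by move=> _ [g Ag <-]; exact: (vge_horner dv (lifting_coefs_R Ag) Ry).
- by exists 1; rewrite ?hornerC //; apply: lifting_coefsC; apply: lifting1.
- move=> _ _ [g Ag <-] [h Ah <-]; exists (g - h); first exact: lifting_coefsB.
  by rewrite hornerD hornerN.
- move=> _ _ [g Ag <-] [h Ah <-]; exists (g * h); first exact: lifting_coefsM.
  by rewrite hornerM.
- by move=> _ [g Ag <-]; apply: gy.
Qed.

Lemma lifting_section : (forall z, (phi @` A) z) ->
  exists s : {rmorphism D -> K}, forall z, A (s z) /\ phi (s z) = z.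
Proof.
move=> onto; have [s sP] : {s : D -> K & forall z, A (s z) /\ phi (s z) = z}.
  by apply: (@choice _ _ (fun z x => A x /\ phi x = z)) => z; have [x Ax <-] := onto z; exists x.
have Rs z := lifting_R (sP z).1.
have sB : forall y z, s (y - z) = s y - s z.
  move=> y z; apply: lifting_phi_inj; [exact: (sP _).1 | apply: liftingB; apply: (sP _).1 |].
  by rewrite phiB ?Rs // !(sP _).2.
have s1 : s 1 = 1.
  by apply: lifting_phi_inj; [exact: (sP _).1 | exact: lifting1 | rewrite (sP _).2 phi1].
have sM : forall y z, s (y * z) = s y * s z.
  move=> y z; apply: lifting_phi_inj; [exact: (sP _).1 | apply: liftingM; apply: (sP _).1 |].
  by rewrite phiM ?Rs // !(sP _).2.
exists (HB.pack_for {rmorphism D -> K} s (GRing.isZmodMorphism.Build _ _ s sB)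
          (GRing.isMonoidMorphism.Build _ _ s (s1, sM))).
exact: sP.
Qed.

Section Maximal.
Hypothesis Amax : forall B, A `<=` B -> lifting_subring B -> B = A.

Lemma maximal_liftingV x : A x -> A x^-1.
Proof.
move=> Ax; have [->|x0] := eqVneq x 0; first by rewrite invr0; apply: lifting0.
have A1 : A 1 /\ (1 : K) != 0 by split; [apply: lifting1 | apply: oner_neq0].
have AF : A `<=` [set a / c | a in A & c in [set c | A c /\ c != 0]].
  by move=> a Aa; exists a => //; exists 1; rewrite ?divr1.
rewrite -(Amax AF lifting_subring_frac).
by exists 1; [apply: lifting1 | exists x; rewrite ?div1r].
Qed.

Lemma maximal_lifting_adjoin y : R_v y ->
  (forall g, coefs_in A g -> vge v g.[y] 1 -> g.[y] = 0) -> A y.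
Proof.
move=> Ry gy; have AX : A `<=` [set g.[y] | g in coefs_in A].
  by move=> x Ax; exists x%:P; [apply: lifting_coefsC | apply: hornerC].
rewrite -(Amax AX (lifting_subring_adjoin Ry gy)).
by exists 'X; [apply: lifting_coefsX | apply: hornerX].
Qed.

Lemma maximal_lifting_transcendental z :
  (forall p, coefs_in (phi @` A) p -> root p z -> p = 0) -> (phi @` A) z.
Proof.
move=> ztr; have [y Ry yz] := phi_surj z; subst z; exists y => //.
apply: (maximal_lifting_adjoin Ry) => g Ag gy.
have /eqP := ztr _ (coefs_in_map_phi Ag) (root_map_phi (lifting_coefs_R Ag) Ry gy).
by rewrite lifting_map_phi_eq0 // => /eqP ->; rewrite horner0.
Qed.

Lemma maximal_lifting_algebraic z :
  (exists p, [/\ p != 0, coefs_in (phi @` A) p & root p z]) -> (phi @` A) z.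
Proof.
move=> /ex_min_size_root [p [p0 Bp pz pmin]].
have [q Aq qp] := lift_coefs Bp; have Rq := lifting_coefs_R Aq.
have sq : size q = size p by rewrite -qp lifting_size_map_phi.
have q0 : q != 0 by rewrite -(lifting_map_phi_eq0 Aq) qp.
have [y0 Ry0 y0z] := phi_surj z.
have q1 : vge v q.[y0] 1.
  by rewrite -(phi_eq0 (vge_horner dv Rq Ry0)) (phi_horner Rq Ry0) qp y0z.
have dq1 : ~~ vge v q^`().[y0] 1.
  have Rdq := coefs_in_deriv dv Rq.
  rewrite -(phi_eq0 (vge_horner dv Rdq Ry0)) (phi_horner Rdq Ry0).
  rewrite map_phi_deriv // qp y0z; apply/negP => dpz.
  have Bdp : coefs_in (phi @` A) p^`().
    by rewrite -qp -map_phi_deriv //; apply/coefs_in_map_phi/lifting_coefs_deriv.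
  have := pmin _ (deriv_neq0_pchar0 ch0 (root_size_gt1 p0 pz)) Bdp dpz.
  by rewrite leqNgt lt_size_deriv.
have [y [Ry qy yy0]] := hensel dv cv Rq Ry0 q1 dq1.
exists y; last by rewrite (phi_congr Ry Ry0 yy0).
apply: (maximal_lifting_adjoin Ry) => g Ag gy.
have Aq' : A (lead_coef q)^-1 by apply: maximal_liftingV; rewrite lead_coefE.
have [r [Ar srq ry]] := coefs_in_reduce liftingB liftingM Aq Aq' q0 (introT rootP qy) Ag.
rewrite -ry in gy *; apply/eqP; apply: contraLR srq => r0; rewrite -leqNgt.
rewrite -lifting_size_map_phi // sq pmin //.
- by rewrite lifting_map_phi_eq0 //; apply: contra r0 => /eqP ->; rewrite horner0.
- exact: coefs_in_map_phi.
- by rewrite -y0z -(phi_congr Ry Ry0 yy0); exact: (root_map_phi (lifting_coefs_R Ar) Ry gy).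
Qed.

Lemma maximal_lifting_onto z : (phi @` A) z.
Proof.
have [alg|tr] := pselect (exists p, [/\ p != 0, coefs_in (phi @` A) p & root p z]).
  exact: maximal_lifting_algebraic.
apply: maximal_lifting_transcendental => p Bp pz.
by apply: contrapT => p0; apply: tr; exists p; split => //; apply/eqP.
Qed.

End Maximal.

End Subring.

Theorem lifting_subring_extends_to_section S : lifting_subring S ->
  exists s : {rmorphism D -> K},
    [/\ forall z, R_v (s z), forall z, phi (s z) = z & forall x, S x -> s (phi x) = x].
Proof.
move=> hS; have [A [SA hA Amax]] := ex_maximal_above hS (@lifting_subring_bigcup).
have [s sA] := lifting_section hA (maximal_lifting_onto hA Amax).
exists s; split=> [z | z | x Sx]; [exact: (lifting_R hA (sA z).1) | exact: (sA z).2 |].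
by apply: (lifting_phi_inj hA (sA _).1 (SA _ Sx)); rewrite (sA _).2.
Qed.

Lemma subfield_lifting_subring (S : pred K) :
  is_subfield S -> {subset S <= val_ring v} -> lifting_subring [set x | x \in S].
Proof.
case=> _ S1 SB SM SV SR; split; [by move=> x /SR | exact: S1 | exact: SB | exact: SM |].
move=> x Sx x1; apply/eqP/negPn/negP => x0.
by have := vgeM dv x1 (SR _ (SV _ Sx)); rewrite addr0 divff // /vge oner_eq0 valuation1.
Qed.

Lemma algebraic_over_phi (S : pred K) (T : pred D) x :
    is_subfield S -> {subset S <= val_ring v} -> {in S, forall y, phi y \in T} ->
    0 \in T -> R_v x ->
  algebraic_over S x -> algebraic_over T (phi x).
Proof.
move=> Ssub SR ST T0 Rx [p /andP[p0 Sp] px].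
have S0 : 0 \in S by case: Ssub.
have hS := subfield_lifting_subring Ssub SR.
have {}Sp : coefs_in [set x | x \in S] p by move=> i; apply: (elimT (polyOverP0 _ S0) Sp).
exists (map_poly phi p); last first.
  by rewrite /root -phi_horner ?(rootP px) ?phi0 //; exact: (lifting_coefs_R hS Sp).
rewrite (lifting_map_phi_eq0 hS Sp) p0 /=.
by apply/(polyOverP0 _ T0) => i; rewrite coef_map_phi; apply: ST; apply: Sp.
Qed.

End Residue.

Theorem proposition5
  (K Delta : fieldType) (v : K -> int) (phi : K -> Delta)
  (k F : pred K) (F' : pred Delta) (sigma : Delta -> K) (omega : K) :
  (* hat v : rank-one discrete valuation on the complete field K *)
  discrete_valuation v -> complete_wrt v ->
  (* Delta is the residue field, phi : R -> Delta the natural map *)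
  residue_map v phi ->
  (* k : subfield of characteristic 0 on which v is trivial *)
  is_subfield k -> [pchar K] =i pred0 ->
  (forall c, c \in k -> c != 0 -> v c = 0) ->
  (* F subfield of K contained in R and containing k *)
  is_subfield F -> {subset F <= val_ring v} -> {subset k <= F} ->
  (* F' subfield of Delta containing (the image of) k *)
  is_subfield F' -> (forall c, c \in k -> phi c \in F') ->
  (forall x, x \in F -> phi x \in F') ->
  (* sigma : F' -> F is a k-homomorphism with phi \o sigma = id *)
  (forall y, y \in F' -> sigma y \in F) ->
  sigma 1 = 1 ->
  (forall y z, y \in F' -> z \in F' -> sigma (y + z) = sigma y + sigma z) ->
  (forall y z, y \in F' -> z \in F' -> sigma (y * z) = sigma y * sigma z) ->
  (forall c, c \in k -> sigma (phi c) = c) ->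
  (forall y, y \in F' -> phi (sigma y) = y) ->
  (* omega in R with v(omega) = 0 *)
  omega != 0 -> v omega = 0 ->
  (~ algebraic_over F' (phi omega) ->
     exists sigma' : {rmorphism Delta -> K},
       [/\ (forall y, sigma' y \in val_ring v),
           (forall y, phi (sigma' y) = y),
           (forall c, c \in k -> sigma' (phi c) = c),
           (forall y, y \in F' -> sigma' y = sigma y) &
           ~ algebraic_over F (sigma' (phi omega))]) /\
  (algebraic_over F' (phi omega) ->
     exists sigma' : {rmorphism Delta -> K},
       [/\ (forall y, sigma' y \in val_ring v),
           (forall y, phi (sigma' y) = y),
           (forall c, c \in k -> sigma' (phi c) = c),
           (forall y, y \in F' -> sigma' y = sigma y) &
           algebraic_over F (sigma' (phi omega))]).
Proof.
move=> dv cv rm ksub chK kv Fsub FR kF F'sub kF' FF' sF s1 sD sM sk phis _ _.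
have ch0 : [pchar Delta] =i pred0.
  apply: (residue_pchar0 dv rm) => n n0.
  have n0K : (n%:R : K) != 0 by move/pcharf0P: chK => ->; rewrite -lt0n.
  by rewrite /vge (negbTE n0K) kv ?is_subfield_natr.
have hS := lifting_subring_image rm F'sub (fun y Fy => FR _ (sF y Fy)) s1 sD sM phis.
have [s [sR sphi sS]] := lifting_subring_extends_to_section dv rm cv ch0 hS.
have s_sigma y : y \in F' -> s y = sigma y by move=> Fy; rewrite -{1}(phis y Fy) sS //; exists y.
have sk' c : c \in k -> s (phi c) = c by move=> kc; rewrite s_sigma ?kF' ?sk.
have F'0 : 0 \in F' by case: F'sub.
split=> [tr | alg]; exists s; split=> //.
- by move=> /(algebraic_over_phi dv rm Fsub FR FF' F'0 (sR _)); rewrite sphi.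
- apply: algebraic_over_rmorph alg => //; first by case: Fsub.
  by move=> y Fy; rewrite s_sigma ?sF.
Qed.
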